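(* For any $n\geq 1$, $R_n$ listed in both Reflected Gray Code Order $\prec$ and co-Reflected Gray Code Order is a $3$-adjacent Gray code.
   Context: A restricted growth function of length $n$ is an integer sequence $s_1s_2\ldots s_n$ with $s_1=0$ and $0\leq s_{i+1}\leq \max\{s_j\}_{j=1}^i+1$ for $1\leq i\leq n-1$; $R_n$ is the set of these. On $\{0,1,\ldots,m-1\}^n$ ($m\geq2$), let $k$ be the first position where $s_1\ldots s_n$ and $t_1\ldots t_n$ differ. Reflected Gray Code Order $\prec$: $\mathbf s\prec\mathbf t$ if either $\sum_{i=1}^{k-1}s_i$ is even and $s_k<t_k$, or it is odd and $s_k>t_k$. co-Reflected Gray Code Order: $\mathbf s$ is less than $\mathbf t$ if either $U_k$ is even and $s_k<t_k$, or $U_k$ is odd and $s_k>t_k$, where $U_k=|\{i\in\{1,\ldots,k-1\}: s_i\neq0,\ s_i \text{ even}\}|$. A list of same-length sequences is a $d$-adjacent Gray code if successive sequences differ in at most $d$ positions and these positions are adjacent. *)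

From mathcomp Require Import all_boot.
Set Implicit Arguments. Unset Strict Implicit. Unset Printing Implicit Defensive.

(* Sequences are 0-indexed: position i (0-based) is s_{i+1} in the paper. *)

Definition is_rgf (n : nat) (s : seq nat) : bool :=
  [&& size s == n, nth 0 s 0 == 0 &
      all (fun i => nth 0 s i.+1 <= (\max_(j < i.+1) nth 0 s j).+1) (iota 0 n.-1)].

(* first (0-based) position where s and t differ; = size s if none *)
Definition first_diff (s t : seq nat) : nat :=
  find (fun i => nth 0 s i != nth 0 t i) (iota 0 (size s)).

Definition refl_lt (P : seq nat -> nat -> nat) (s t : seq nat) : bool :=
  let k := first_diff s t in
  (k < size s) &&
  (if ~~ odd (P s k) then nth 0 s k < nth 0 t k else nth 0 t k < nth 0 s k).

(* sum_{i=1}^{k-1} s_i  (1-based), i.e. sum of the first k entries (0-based k) *)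
Definition prefix_sum (s : seq nat) (k : nat) : nat := \sum_(i < k) nth 0 s i.

Definition prefix_U (s : seq nat) (k : nat) : nat :=
  count (fun i => (nth 0 s i != 0) && ~~ odd (nth 0 s i)) (iota 0 k).

Definition rgc_lt : rel (seq nat) := refl_lt prefix_sum.
Definition corgc_lt : rel (seq nat) := refl_lt prefix_U.

Definition diff_pos (n : nat) (s t : seq nat) : seq nat :=
  [seq i <- iota 0 n | nth 0 s i != nth 0 t i].

Definition d_close (d n : nat) (s t : seq nat) : bool :=
  let D := diff_pos n s t in
  (size D <= d) && (D == iota (head 0 D) (size D)).

Definition adj_gray_code (d n : nat) (L : seq (seq nat)) : bool :=
  all (fun s => size s == n) L &&
  all (fun p => d_close d n p.1 p.2) (zip L (behead L)).

Definition rgf_listing (lt : rel (seq nat)) (n : nat) (L : seq (seq nat)) : Prop :=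
  uniq L /\ (forall s, s \in L = is_rgf n s) /\ sorted lt L.

From mathcomp Require Import all_boot zify.
Set Implicit Arguments. Unset Strict Implicit. Unset Printing Implicit Defensive.

(* Both orders compare s and t at their first difference k, increasingly or
   decreasingly according to the parity of a weight sum [P s k] of the common
   prefix, with weights [g (s_i)] such that [g 0] is even and one of [g (m+1)],
   [g (m+2)] is odd: [g = id] for the Reflected order, [g x = (x even, x <> 0)]
   for the co-Reflected one.  If t is the successor of s in R_n, then past
   position k, s is the largest and t the smallest completion of its prefix:
   each later entry is either 0 or the new record (1 + the prefix maximum),
   according to the parity of the prefix.  A 0 keeps the parity, so zeros
   persist; after two consecutive records m+1, m+2 the parity has flipped, so
   the third entry is 0.  Hence s and t agree from k+3 on.  If they agree at
   k+1, they also agree at k+2: both entries are 0, or both are the same record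
   reached with opposite parities, and then the next weight acts on both alike.
   The differences thus form a block of length at most 3 starting at k. *)

Lemma nth_lt_first_diff s t i : i < first_diff s t -> nth 0 s i = nth 0 t i.
Proof.
move=> lt_i; have := before_find 0 lt_i.
have lt_i_size : i < size s.
  by apply: leq_trans lt_i _; rewrite -[X in _ <= X](size_iota 0) find_size.
by rewrite nth_iota // add0n => /negbFE/eqP.
Qed.

Lemma nth_first_diff s t : first_diff s t < size s ->
  nth 0 s (first_diff s t) != nth 0 t (first_diff s t).
Proof.
move=> lt_fd.
have has_diff : has (fun i => nth 0 s i != nth 0 t i) (iota 0 (size s)).
  by rewrite has_find size_iota.
by have := nth_find 0 has_diff; rewrite nth_iota ?add0n.
Qed.

Lemma first_diff_eq s t k : k < size s ->
  (forall i, i < k -> nth 0 s i = nth 0 t i) -> nth 0 s k != nth 0 t k ->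
  first_diff s t = k.
Proof.
move=> lt_k eq_lt neq_k.
have has_diff : has (fun i => nth 0 s i != nth 0 t i) (iota 0 (size s)).
  by apply/hasP; exists k; rewrite ?mem_iota.
have lt_fd : first_diff s t < size s by move: has_diff; rewrite has_find size_iota.
case: (ltngtP (first_diff s t) k) => // [lt_fdk|lt_kfd].
- by move: (nth_first_diff lt_fd); rewrite eq_lt ?eqxx.
- by move: neq_k; rewrite (nth_lt_first_diff lt_kfd) eqxx.
Qed.

Lemma first_diff_lt_size s t : size s = size t ->
  (first_diff s t < size s) = (s != t).
Proof.
move=> eq_size; apply/idP/idP => [lt_fd|neq_st].
  by apply: contra_neq (nth_first_diff lt_fd) => ->.
rewrite /first_diff -[X in _ < X](size_iota 0) -has_find.
apply: contraNT neq_st; rewrite -all_predC => /allP eq_nth; apply/eqP.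
apply: (eq_from_nth (x0 := 0)) => // i lt_i.
by apply/eqP/negPn/(eq_nth i); rewrite mem_iota.
Qed.

Lemma first_diffC s t : size s = size t -> first_diff t s = first_diff s t.
Proof.
move=> eq_size; have [-> //|neq_st] := eqVneq s t.
have lt_fd : first_diff s t < size s by rewrite first_diff_lt_size.
apply: first_diff_eq; first by rewrite -eq_size.
  by move=> i /nth_lt_first_diff.
by rewrite eq_sym nth_first_diff.
Qed.

Lemma all_zip_behead_sorted (T : Type) (e : rel T) (s : seq T) :
  all (fun p => e p.1 p.2) (zip s (behead s)) = sorted e s.
Proof. by case: s => // x s; elim: s x => //= y s IH x; rewrite IH. Qed.

Lemma uniq_sorted_eqVlt (T : eqType) (lt : rel T) (s : seq T) :
  uniq s -> sorted (fun x y => (x == y) || lt x y) s -> sorted lt s.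
Proof.
case: s => // x s; elim: s x => //= y s IH x.
move=> /andP[notin_x uniq_ys] /andP[le_xy path_ys].
rewrite IH // andbT; case: eqVneq le_xy => //= eq_xy.
by rewrite eq_xy mem_head in notin_x.
Qed.

Lemma exists_sorted_enum (T : eqType) (lt : rel T) (p : pred T) (A : seq T) :
  {subset p <= A} -> {in p &, forall x y, x != y -> lt x y || lt y x} ->
  exists L, [/\ uniq L, forall x, x \in L = p x & sorted lt L].
Proof.
move=> sub_pA lt_total; pose le x y := (x == y) || lt x y.
have le_total : {in p &, total le}.
  move=> x y px py; have [->|neq_xy] := eqVneq x y; first by rewrite /le eqxx.
  by rewrite /le (negbTE neq_xy) eq_sym (negbTE neq_xy) lt_total.
have all_p : all p (undup (filter p A)).
  by apply/allP => x; rewrite mem_undup mem_filter => /andP[].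
exists (sort le (undup (filter p A))); split.
- by rewrite sort_uniq undup_uniq.
- by move=> x; rewrite mem_sort mem_undup mem_filter andb_idr //; apply: sub_pA.
- apply: uniq_sorted_eqVlt; first by rewrite sort_uniq undup_uniq.
  exact: sort_sorted_in le_total _ all_p.
Qed.

Lemma sorted_no_between_nthS (T : eqType) (lt : rel T) (L : seq T) x0 i u :
  {in L & &, transitive lt} -> irreflexive lt -> sorted lt L ->
  i.+1 < size L -> u \in L -> lt (nth x0 L i) u -> lt u (nth x0 L i.+1) -> False.
Proof.
move=> lt_trans lt_irr sorted_L lt_i mem_u.
have no_back a b : a <= b -> b < size L -> lt (nth x0 L b) (nth x0 L a) -> False.
  rewrite leq_eqVlt => /predU1P[<- _|lt_ab lt_b]; first by rewrite lt_irr.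
  have lt_a := ltn_trans lt_ab lt_b.
  have lt_nth := sorted_ltn_nth_in lt_trans x0 (allss L) sorted_L a b lt_a lt_b lt_ab.
  have [mem_a mem_b] := (mem_nth x0 lt_a, mem_nth x0 lt_b).
  by move/(lt_trans _ _ _ mem_b mem_a mem_a lt_nth); rewrite lt_irr.
rewrite -(nth_index x0 mem_u); have lt_u := index_mem u L; rewrite -lt_u in mem_u.
case: (leqP (index u L) i) => [le_ui lt_iu _|lt_iu _].
  exact: no_back le_ui (ltnW lt_i) lt_iu.
exact: no_back lt_iu mem_u.
Qed.

Definition prefix_max (s : seq nat) (j : nat) : nat := \max_(i < j) nth 0 s i.

Lemma prefix_maxS s j : prefix_max s j.+1 = maxn (prefix_max s j) (nth 0 s j).
Proof. by rewrite /prefix_max big_ord_recr. Qed.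

Lemma prefix_maxS_record s j :
  nth 0 s j = (prefix_max s j).+1 -> prefix_max s j.+1 = nth 0 s j.
Proof. by rewrite prefix_maxS => ->; apply/maxn_idPr/leqnSn. Qed.

Lemma eq_prefix_max s t j : (forall i, i < j -> nth 0 s i = nth 0 t i) ->
  prefix_max s j = prefix_max t j.
Proof. by move=> eq_st; apply: eq_bigr => i _; apply: eq_st. Qed.

Lemma is_rgfP n s : reflect [/\ size s = n, nth 0 s 0 = 0 &
   forall i, i.+1 < n -> nth 0 s i.+1 <= (prefix_max s i.+1).+1] (is_rgf n s).
Proof.
apply: (iffP and3P) => [[/eqP -> /eqP -> /allP grow]|[-> -> grow]]; split => //.
- by move=> i lt_i; apply: grow; rewrite mem_iota; lia.
- by apply/allP => i; rewrite mem_iota => lt_i; apply: grow; lia.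
Qed.

Lemma rgf_nth_le n s i : is_rgf n s -> nth 0 s i <= i.
Proof.
case/is_rgfP => size_s s0 grow; elim: i {-2}i (leqnn i) => [|i IH] j le_ji.
  by move: le_ji; rewrite leqn0 => /eqP ->; rewrite s0.
move: le_ji; rewrite leq_eqVlt ltnS => /predU1P[->|]; last exact: IH.
have [lt_in|le_ni] := ltnP i.+1 n; last by rewrite nth_default // size_s.
apply: leq_trans (grow _ lt_in) _; rewrite ltnS; apply/bigmax_leqP => x _.
by apply: leq_trans (IH x _) _; rewrite -ltnS.
Qed.

Fixpoint bounded_seqs (b m : nat) : seq (seq nat) :=
  if m is m'.+1 then [seq x :: y | x <- iota 0 b, y <- bounded_seqs b m']
  else [:: [::]].

Lemma mem_bounded_seqs b s :
  all (fun x => x < b) s -> s \in bounded_seqs b (size s).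
Proof.
elim: s => [|x s IH] //= /andP[lt_x lt_s].
by apply: (allpairs_f (fun x y => x :: y)); rewrite ?mem_iota // IH.
Qed.

Lemma rgf_mem_bounded_seqs n s : is_rgf n s -> s \in bounded_seqs n n.
Proof.
move=> rgf_s; have [size_s _ _] := is_rgfP n s rgf_s.
rewrite -{2}size_s; apply: mem_bounded_seqs; apply/(all_nthP 0) => i lt_i.
by apply: leq_ltn_trans (rgf_nth_le i rgf_s) _; rewrite -size_s.
Qed.

Definition replace_tail (s : seq nat) (j v : nat) : seq nat :=
  mkseq (fun i => if i < j then nth 0 s i else if i == j then v else 0) (size s).

Lemma size_replace_tail s j v : size (replace_tail s j v) = size s.
Proof. exact: size_mkseq. Qed.

Lemma nth_replace_tail_lt s j v i :
  i < j -> nth 0 (replace_tail s j v) i = nth 0 s i.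
Proof.
move=> lt_ij; have [lt_is|le_si] := ltnP i (size s).
  by rewrite nth_mkseq // lt_ij.
by rewrite !nth_default ?size_replace_tail.
Qed.

Lemma nth_replace_tail_eq s j v : j < size s -> nth 0 (replace_tail s j v) j = v.
Proof. by move=> lt_js; rewrite nth_mkseq // ltnn eqxx. Qed.

Lemma nth_replace_tail_gt s j v i : j < i -> nth 0 (replace_tail s j v) i = 0.
Proof.
move=> lt_ji; have [lt_is|le_si] := ltnP i (size s).
  by rewrite nth_mkseq // ltnNge ltnW //= gtn_eqF.
by rewrite nth_default ?size_replace_tail.
Qed.

Lemma replace_tail_rgf n s j v : is_rgf n s -> 0 < j ->
  v <= (prefix_max s j).+1 -> is_rgf n (replace_tail s j v).
Proof.
case/is_rgfP => size_s s0 grow lt_0j le_v; apply/is_rgfP.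
have eq_max i : i <= j -> prefix_max (replace_tail s j v) i = prefix_max s i.
  move=> le_ij; apply: eq_prefix_max => i' lt_i'i.
  by rewrite nth_replace_tail_lt // (leq_trans lt_i'i).
split; first by rewrite size_replace_tail.
  by rewrite nth_replace_tail_lt.
move=> i lt_in; case: (ltngtP i.+1 j) => [lt_ij|lt_ji|eq_ij].
- by rewrite nth_replace_tail_lt // eq_max ?grow // ltnW.
- by rewrite nth_replace_tail_gt.
- by subst j; rewrite nth_replace_tail_eq ?size_s // eq_max.
Qed.

Lemma d_close_block d n s t k l : k + l <= n -> l <= d ->
  (forall i, i < n -> (nth 0 s i != nth 0 t i) = (k <= i < k + l)) ->
  d_close d n s t.
Proof.
move=> le_kl le_ld diff_block; rewrite /d_close.
have -> : diff_pos n s t = iota k l.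
  apply: (irr_sorted_eq ltn_trans ltnn); last 1 first.
  - move=> i; rewrite mem_filter !mem_iota /=.
    by have [/diff_block ->|le_ni] := ltnP i n; [rewrite andbT | rewrite andbF; lia].
  - by apply: sorted_filter; [exact: ltn_trans | exact: iota_ltn_sorted].
  - exact: iota_ltn_sorted.
by rewrite size_iota le_ld; case: l {le_kl le_ld diff_block} => [|l] /=.
Qed.

Lemma d_close3_from n s t k : k < n ->
  (forall i, i < k -> nth 0 s i = nth 0 t i) -> nth 0 s k != nth 0 t k ->
  (forall i, k.+3 <= i -> nth 0 s i = nth 0 t i) ->
  (k.+2 < n -> nth 0 s k.+1 = nth 0 t k.+1 -> nth 0 s k.+2 = nth 0 t k.+2) ->
  d_close 3 n s t.
Proof.
move=> lt_kn eq_lt neq_k eq_ge step.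
pose d1 := (k.+1 < n) && (nth 0 s k.+1 != nth 0 t k.+1).
pose d2 := (k.+2 < n) && (nth 0 s k.+2 != nth 0 t k.+2).
have d21 : d2 -> d1.
  rewrite /d1 /d2 => /andP[lt_k2 neq_k2]; apply/andP; split; first lia.
  by apply: contra_neq neq_k2; apply: step.
have diff_at i : i < n ->
    (nth 0 s i != nth 0 t i) = [|| i == k, (i == k.+1) && d1 | (i == k.+2) && d2].
  move=> lt_in; rewrite /d1 /d2.
  case: (ltngtP i k) => [lt_ik|lt_ki|->]; last by rewrite neq_k.
    by rewrite eq_lt // eqxx (@ltn_eqF i k.+1) ?(@ltn_eqF i k.+2) //; lia.
  have [eq_i|ne1] := eqVneq i k.+1.
    by subst i; rewrite lt_in (@ltn_eqF k.+1 k.+2) ?orbF.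
  have [eq_i|ne2] := eqVneq i k.+2; first by subst i; rewrite lt_in.
  by rewrite eq_ge ?eqxx ?(negbTE ne1) ?(negbTE ne2) //; lia.
apply: (@d_close_block 3 n s t k (1 + d1 + d2)) => [||i /diff_at ->];
  by move: d21; rewrite /d1 /d2; lia.
Qed.

Definition prefix_determined (P : seq nat -> nat -> nat) :=
  forall s t k, (forall i, i < k -> nth 0 s i = nth 0 t i) -> P s k = P t k.

Section ReflectedOrder.
Variable P : seq nat -> nat -> nat.
Hypothesis P_prefix : prefix_determined P.

Lemma refl_lt_congr s t s' t' : size s' = size s -> first_diff s t < size s ->
  (forall i, i <= first_diff s t -> nth 0 s' i = nth 0 s i) ->
  (forall i, i <= first_diff s t -> nth 0 t' i = nth 0 t i) ->
  refl_lt P s' t' = refl_lt P s t.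
Proof.
move=> eq_size lt_fd eq_s eq_t; set k := first_diff s t in lt_fd eq_s eq_t *.
have fd' : first_diff s' t' = k.
  apply: first_diff_eq; first by rewrite eq_size.
    by move=> i lt_ik; rewrite eq_s ?eq_t ?(ltnW lt_ik) //; apply: nth_lt_first_diff.
  by rewrite eq_s ?eq_t // nth_first_diff.
rewrite /refl_lt fd' eq_size lt_fd eq_s ?eq_t // (P_prefix (t := s)) // => i lt_ik.
by rewrite eq_s // ltnW.
Qed.

Lemma refl_lt_irr : irreflexive (refl_lt P).
Proof. by move=> s; rewrite /refl_lt first_diff_lt_size ?eqxx. Qed.

Lemma refl_lt_total s t : size s = size t -> s != t ->
  refl_lt P s t || refl_lt P t s.
Proof.
move=> eq_size neq_st.
have lt_fd : first_diff s t < size s by rewrite first_diff_lt_size.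
have neq_k := nth_first_diff lt_fd.
rewrite /refl_lt (first_diffC eq_size) -eq_size lt_fd /= (P_prefix (t := s)).
  by case: odd neq_k; rewrite /= neq_ltn // orbC.
by move=> i /nth_lt_first_diff.
Qed.

Lemma refl_lt_trans s t u : size s = size t -> size t = size u ->
  refl_lt P s t -> refl_lt P t u -> refl_lt P s u.
Proof.
move=> eq_st eq_tu lt_st lt_tu.
have [/andP[lt_k1 _] /andP[lt_k2 _]] := (lt_st, lt_tu).
set k1 := first_diff s t in lt_k1 lt_st; set k2 := first_diff t u in lt_k2 lt_tu.
case: (ltngtP k1 k2) => [lt_k12|lt_k21|eq_k].
- rewrite (@refl_lt_congr s t s u) // => i le_ik1.
  by rewrite (@nth_lt_first_diff t u) // (leq_ltn_trans le_ik1).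
- rewrite (@refl_lt_congr t u s u) ?eq_st // => i le_ik2.
  by rewrite (@nth_lt_first_diff s t) // (leq_ltn_trans le_ik2).
- have eq_prefix i : i < k1 -> nth 0 s i = nth 0 u i.
    move=> lt_ik; rewrite (@nth_lt_first_diff s t) //.
    by rewrite (@nth_lt_first_diff t u) // -/k2 -eq_k.
  move: lt_st lt_tu; rewrite /refl_lt -/k1 -/k2 -eq_k -(P_prefix (s := s)); last first.
    by move=> i /nth_lt_first_diff.
  move=> /andP[_ lt_st] /andP[_ lt_tu].
  have neq_k : nth 0 s k1 != nth 0 u k1.
    by case: odd lt_st lt_tu => /= ? ?; apply/eqP => eq_su; lia.
  rewrite (first_diff_eq _ eq_prefix neq_k) ?lt_k1 //=.
  by case: odd lt_st lt_tu => /= ? ?; lia.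
Qed.

Lemma rgf_listing_exists n : exists L, rgf_listing (refl_lt P) n L.
Proof.
have size_rgf x : is_rgf n x -> size x = n by case/is_rgfP.
have [|L [uniq_L mem_L sorted_L]] :=
  @exists_sorted_enum _ (refl_lt P) (is_rgf n) _ (@rgf_mem_bounded_seqs n).
  move=> x y /size_rgf size_x /size_rgf size_y.
  by apply: refl_lt_total; rewrite size_x size_y.
by exists L.
Qed.

End ReflectedOrder.

Section ParityWeight.
Variables (P : seq nat -> nat -> nat) (g : nat -> nat).
Hypothesis P_sum : forall s k, P s k = \sum_(i < k) g (nth 0 s i).
Hypothesis g0_even : ~~ odd (g 0).
Hypothesis g_odd : forall m, odd (g m.+1) || odd (g m.+2).

Lemma prefix_determined_sum : prefix_determined P.
Proof. by move=> s t k eq_st; rewrite !P_sum; apply: eq_bigr => i _; rewrite eq_st. Qed.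

Lemma odd_PS s j : odd (P s j.+1) = odd (P s j) (+) odd (g (nth 0 s j)).
Proof. by rewrite !P_sum big_ord_recr oddD. Qed.

(* The largest ([r = false]) or smallest ([r = true]) value, in the order
   [refl_lt P], that an RGF with prefix [x_0 ... x_{j-1}] can take at [j]. *)
Definition extreme_entry (r : bool) (x : seq nat) (j : nat) : nat :=
  if odd (P x j) == r then (prefix_max x j).+1 else 0.

Definition extreme_tail (r : bool) (k : nat) (x : seq nat) : Prop :=
  forall j, k < j < size x -> nth 0 x j = extreme_entry r x j.

Section ExtremeTail.
Variables (r : bool) (k : nat) (x : seq nat).
Hypothesis x_extreme : extreme_tail r k x.

Lemma extreme_tail_zeroS j : k < j -> j.+1 < size x ->
  nth 0 x j = 0 -> nth 0 x j.+1 = 0.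
Proof.
move=> lt_kj lt_j1 x_j0.
have : nth 0 x j = extreme_entry r x j by apply: x_extreme; rewrite lt_kj ltnW.
rewrite x_j0 /extreme_entry; case: ifP => // neq_r _.
rewrite x_extreme /extreme_entry; last by rewrite ltnS (ltnW lt_kj) lt_j1.
by rewrite odd_PS x_j0 (negbTE g0_even) addbF neq_r.
Qed.

Lemma extreme_tail_zero_from j0 : k < j0 -> nth 0 x j0 = 0 ->
  forall j, j0 <= j -> nth 0 x j = 0.
Proof.
move=> lt_kj0 x_j00; elim=> [|j IH].
  by rewrite leqn0 => /eqP eq_j0; subst j0.
rewrite leq_eqVlt => /predU1P[<- //|lt_j0j].
have [lt_jx|le_xj] := ltnP j.+1 (size x); last by rewrite nth_default.
by rewrite (extreme_tail_zeroS (leq_trans lt_kj0 lt_j0j)) ?IH.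
Qed.

Lemma extreme_tail_nonzero j : k < j < size x -> nth 0 x j != 0 ->
  odd (P x j) = r /\ nth 0 x j = (prefix_max x j).+1.
Proof.
move/x_extreme => ->; rewrite /extreme_entry.
by case: (odd (P x j) =P r) => [-> _|_]; [split | rewrite eqxx].
Qed.

Lemma extreme_tail_two_nonzero j : k < j -> j.+2 < size x ->
  nth 0 x j != 0 -> nth 0 x j.+1 != 0 -> nth 0 x j.+2 = 0.
Proof.
move=> lt_kj lt_j2 nz0 nz1.
have [odd0 x0] : odd (P x j) = r /\ nth 0 x j = (prefix_max x j).+1.
  by apply: extreme_tail_nonzero => //; lia.
have [odd1 x1] : odd (P x j.+1) = r /\ nth 0 x j.+1 = (prefix_max x j.+1).+1.
  by apply: extreme_tail_nonzero => //; lia.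
have g1_even : ~~ odd (g (prefix_max x j).+1).
  by move: odd1; rewrite odd_PS odd0 x0; case: r; case: odd.
rewrite x_extreme; last lia.
rewrite /extreme_entry odd_PS odd1 x1 prefix_maxS_record // x0.
by move: (g_odd (prefix_max x j)) g1_even; case: r; case: odd; case: odd.
Qed.

Lemma extreme_tail_zero_after j : k.+3 <= j -> nth 0 x j = 0.
Proof.
move=> le_k3j; have [le_xj|lt_jx] := leqP (size x) j; first by rewrite nth_default.
have zero_from j0 : k < j0 <= j -> nth 0 x j0 = 0 -> nth 0 x j = 0.
  by case/andP=> lt_kj0 le_j0j x_j00; apply: extreme_tail_zero_from x_j00 _ le_j0j.
have [x1|nz1] := eqVneq (nth 0 x k.+1) 0; first by apply: (zero_from k.+1) => //; lia.
have [x2|nz2] := eqVneq (nth 0 x k.+2) 0; first by apply: (zero_from k.+2) => //; lia.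
by apply: (zero_from k.+3); [lia | apply: extreme_tail_two_nonzero => //; lia].
Qed.

End ExtremeTail.

Lemma extreme_tails_eqS r k s t j :
  extreme_tail r k s -> extreme_tail (~~ r) k t ->
  k < j -> j.+1 < size s -> j.+1 < size t ->
  nth 0 s j = nth 0 t j -> nth 0 s j.+1 = nth 0 t j.+1.
Proof.
move=> s_extreme t_extreme lt_kj lt_js lt_jt eq_j.
have [s0|nz] := eqVneq (nth 0 s j) 0.
  by rewrite (extreme_tail_zeroS s_extreme) ?(extreme_tail_zeroS t_extreme) // -eq_j.
have [odd_s s_j] := extreme_tail_nonzero s_extreme (j := j) ltac:(lia) nz.
rewrite eq_j in nz.
have [odd_t t_j] := extreme_tail_nonzero t_extreme (j := j) ltac:(lia) nz.
rewrite s_extreme ?t_extreme; try lia.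
rewrite /extreme_entry !odd_PS odd_s odd_t !prefix_maxS_record // eq_j.
by case: r {odd_s odd_t s_extreme t_extreme}; case: odd.
Qed.

Lemma replace_tail_extreme n r x j : is_rgf n x -> 0 < j < n ->
  nth 0 x j != extreme_entry r x j ->
  is_rgf n (replace_tail x j (extreme_entry r x j)) /\
  (if r then refl_lt P (replace_tail x j (extreme_entry r x j)) x
   else refl_lt P x (replace_tail x j (extreme_entry r x j))).
Proof.
move=> rgf_x /andP[lt_0j lt_jn]; have [size_x _ grow] := is_rgfP n x rgf_x.
set v := extreme_entry r x j; set u := replace_tail x j v => neq_v.
have le_xj : nth 0 x j <= (prefix_max x j).+1.
  by rewrite -(prednK lt_0j) grow ?prednK.
have le_v : v <= (prefix_max x j).+1 by rewrite /v /extreme_entry; case: ifP.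
split; first exact: replace_tail_rgf.
have lt_j : j < size x by rewrite size_x.
have u_j : nth 0 u j = v by rewrite nth_replace_tail_eq.
have fd_xu : first_diff x u = j.
  by apply: first_diff_eq; rewrite // ?u_j // => i lt_ij; rewrite nth_replace_tail_lt.
have fd_ux : first_diff u x = j by rewrite first_diffC ?size_replace_tail.
have P_u : P u j = P x j.
  by apply: prefix_determined_sum => i lt_ij; rewrite nth_replace_tail_lt.
rewrite /refl_lt fd_ux fd_xu size_replace_tail lt_j P_u u_j.
move: neq_v le_v; clear fd_xu fd_ux P_u u_j; rewrite {}/u {}/v /extreme_entry.
by case: r; case: odd => /= neq_v le_v; lia.
Qed.

Section Consecutive.
Variables (n : nat) (s t : seq nat).
Hypotheses (rgf_s : is_rgf n s) (rgf_t : is_rgf n t) (lt_st : refl_lt P s t).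
Hypothesis nothing_between :
  forall u, is_rgf n u -> refl_lt P s u -> refl_lt P u t -> False.

Let k := first_diff s t.

Lemma consecutive_extreme_tails : extreme_tail false k s /\ extreme_tail true k t.
Proof.
have [[size_s _ _] [size_t _ _]] := (is_rgfP n s rgf_s, is_rgfP n t rgf_t).
have lt_k : k < size s by case/andP: lt_st.
have lt_congr u v : size u = size s ->
    (forall i, i <= k -> nth 0 u i = nth 0 s i) ->
    (forall i, i <= k -> nth 0 v i = nth 0 t i) -> refl_lt P u v = refl_lt P s t.
  by move=> *; apply: refl_lt_congr => //; apply: prefix_determined_sum.
split=> j /andP[lt_kj lt_j]; apply/eqP/negPn/negP => neq_j.
- have [rgf_u lt_su] := replace_tail_extreme (r := false) rgf_s (j := j) ltac:(lia) neq_j.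
  apply: (nothing_between rgf_u lt_su); rewrite lt_congr ?size_replace_tail // => i le_ik.
  by rewrite nth_replace_tail_lt //; lia.
- have [rgf_u lt_ut] := replace_tail_extreme (r := true) rgf_t (j := j) ltac:(lia) neq_j.
  apply: (nothing_between rgf_u _ lt_ut); rewrite lt_congr // => i le_ik.
  by rewrite nth_replace_tail_lt //; lia.
Qed.

Lemma consecutive_d_close : d_close 3 n s t.
Proof.
have [s_extreme t_extreme] := consecutive_extreme_tails.
have [[size_s _ _] [size_t _ _]] := (is_rgfP n s rgf_s, is_rgfP n t rgf_t).
have lt_k : k < size s by case/andP: lt_st.
apply: (@d_close3_from n s t k); first by rewrite -size_s.
- by move=> i /nth_lt_first_diff.
- exact: nth_first_diff.
- move=> i le_k3i.
  by rewrite (extreme_tail_zero_after s_extreme) ?(extreme_tail_zero_after t_extreme).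
- move=> lt_k2n.
  by apply: (extreme_tails_eqS s_extreme t_extreme); rewrite ?size_s ?size_t.
Qed.

End Consecutive.

Lemma rgf_listing_adj_gray_code n L :
  rgf_listing (refl_lt P) n L -> adj_gray_code 3 n L.
Proof.
case=> _ [mem_L sorted_L].
have size_L x : x \in L -> size x = n by rewrite mem_L => /is_rgfP[].
have lt_trans : {in L & &, transitive (refl_lt P)}.
  move=> y x z /size_L size_y /size_L size_x /size_L size_z.
  apply: refl_lt_trans; rewrite ?size_x ?size_y ?size_z //.
  exact: prefix_determined_sum.
rewrite /adj_gray_code all_zip_behead_sorted; apply/andP; split.
  by apply/allP => x /size_L ->.
apply/(sortedP [::]) => i lt_i.
have rgf_nth j : j < size L -> is_rgf n (nth [::] L j).
  by move=> lt_j; rewrite -mem_L mem_nth.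
apply: consecutive_d_close; [exact: rgf_nth (ltnW lt_i) | exact: rgf_nth | exact/sortedP |].
move=> u; rewrite -mem_L.
exact: (sorted_no_between_nthS lt_trans (@refl_lt_irr P) sorted_L lt_i).
Qed.

End ParityWeight.

Definition nonzero_even (x : nat) : nat := (x != 0) && ~~ odd x.

Lemma prefix_U_sum s k : prefix_U s k = \sum_(i < k) nonzero_even (nth 0 s i).
Proof.
rewrite /prefix_U -sum1_count big_mkcond.
rewrite -(big_mkord xpredT (fun i => nonzero_even (nth 0 s i))) /index_iota subn0.
by apply: eq_bigr => i _; rewrite /nonzero_even; case: ifP.
Qed.

Theorem corollary1 (n : nat) : 1 <= n ->
  ((exists L, rgf_listing rgc_lt n L) /\
   (forall L, rgf_listing rgc_lt n L -> adj_gray_code 3 n L)) /\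
  ((exists L, rgf_listing corgc_lt n L) /\
   (forall L, rgf_listing corgc_lt n L -> adj_gray_code 3 n L)).
Proof.
have prefix_sum_id s k : prefix_sum s k = \sum_(i < k) id (nth 0 s i) by [].
have odd_step m : odd (id m.+1) || odd (id m.+2) by rewrite /= negbK; case: odd.
have nonzero_even_step m : odd (nonzero_even m.+1) || odd (nonzero_even m.+2).
  by rewrite /nonzero_even /= !negbK; case: (odd m).
move=> _; split; split.
- exact: rgf_listing_exists (@prefix_determined_sum _ id prefix_sum_id) n.
- exact: (@rgf_listing_adj_gray_code _ id prefix_sum_id isT odd_step).
- exact: rgf_listing_exists (prefix_determined_sum prefix_U_sum) n.
- exact: (rgf_listing_adj_gray_code prefix_U_sum isT nonzero_even_step).
Qed.
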